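(* Let $n\ge5$ and $S\subseteq V(C_n)$. Suppose (1) every gap of $S$ contains at most $3$ vertices, and at most one gap of $S$ contains $3$ vertices; and (2) if a gap of $S$ contains at least $2$ vertices, then its neighboring gaps contain at most $1$ vertex. Then $S$ is a distance-$1$ resolving set of $C_n$.
   Context: $C_n$ is the cycle on $n$ vertices. $d$ is the shortest-path distance and $d_1(x,y)=\min\{d(x,y),2\}$; $S$ is a distance-$1$ resolving set if for all distinct $x,y$ some $z\in S$ has $d_1(x,z)\ne d_1(y,z)$. For a set $M$ of at least two vertices of $C_n$ and distinct $u_i,u_j\in M$, let $P,P'$ be the two $u_i$–$u_j$ paths in $C_n$. If one of them, say $P$, contains no vertices of $M$ other than $u_i,u_j$, then $u_i,u_j$ are neighboring vertices of $M$ and $V(P)-\{u_i,u_j\}$ is a gap of $M$ (possibly empty). The two gaps determined by a vertex of $M$ and its two neighboring vertices of $M$ are called neighboring gaps. A set $M$ with $|M|=r$ has $r$ gaps. *)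

(* The cycle C_n has vertex set 'I_n, with i adjacent to
   i+1 mod n. *)
From mathcomp Require Import all_boot.
Set Implicit Arguments. Unset Strict Implicit. Unset Printing Implicit Defensive.

Definition fdist (n : nat) (x y : 'I_n) : nat := (y + n - x) %% n.

Definition cdist (n : nat) (x y : 'I_n) : nat := minn (fdist x y) (fdist y x).

Definition d1 (n : nat) (x y : 'I_n) : nat := minn (cdist x y) 2.

Definition dist1_resolving (n : nat) (S : {set 'I_n}) : Prop :=
  forall x y : 'I_n, x != y -> exists2 z, z \in S & d1 x z != d1 y z.

(* the gap of S following u in S (clockwise): the vertices strictly between
   u and the next vertex of S, i.e. V(P) - {u, v} for the S-free path P from
   u to its clockwise neighbouring vertex v of S. *)
Definition gap (n : nat) (S : {set 'I_n}) (u : 'I_n) : {set 'I_n} :=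
  [set x : 'I_n | (0 < fdist u x) &&
     [forall v in S, ~~ ((0 < fdist u v) && (fdist u v <= fdist u x))]].

Definition next_in (n : nat) (S : {set 'I_n}) (u v : 'I_n) : Prop :=
  [/\ v \in S, v != u & forall w, w \in S -> 0 < fdist u w -> fdist u v <= fdist u w].

(* the set of gaps of S (|S| gaps when |S| >= 2) *)
Definition gaps (n : nat) (S : {set 'I_n}) : {set {set 'I_n}} :=
  [set gap S u | u in S].

(* G and H are neighbouring gaps: they are the two gaps determined by a vertex
   v of S and its two neighbouring vertices u (before v) and w (after v):
   G = gap before v = gap S u, H = gap after v = gap S v. *)
Definition neighboring_gaps (n : nat) (S : {set 'I_n}) (G H : {set 'I_n}) : Prop :=
  exists u v, [/\ u \in S, next_in S u v, G = gap S u & H = gap S v].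

From mathcomp Require Import all_boot ssralg zmodp zify ring.
Set Implicit Arguments. Unset Strict Implicit. Unset Printing Implicit Defensive.
Import GRing.Theory.

(* Vertices of C_(n+2) are read as elements of the ring 'I_(n+2) = Z/(n+2),
   so that u + k is the vertex k steps clockwise from u.
   Suppose x != y are not resolved by S: d1(x,z) = d1(y,z) for all z in S.
   Then x, y are not in S.  If x+1 were in S, y would be its other neighbour
   x+2, and neither x-1 nor x+3 could be in S (n >= 5); so x+1 would separate
   two gaps with at least 2 vertices each, against (2).  If x-1 were in S,
   then y = x-2 and y+1 = x-1 would be in S, which was just excluded.
   Hence x-1, x, x+1 and likewise y-1, y, y+1 avoid S; as no gap has 4
   vertices, x-2 and y-2 are distinct vertices of S followed by gaps of
   exactly 3 vertices, against (1). *)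

Section Cycle.
Local Open Scope ring_scope.
Variable n : nat.
Implicit Types a b u v w x y : 'I_n.+2.

Lemma val_natr k : (k%:R : 'I_n.+2) = (k %% n.+2)%N :> nat.
Proof. by rewrite Zp_nat. Qed.

Lemma natr_inj i j : (i < n.+2)%N -> (j < n.+2)%N -> i%:R = j%:R :> 'I_n.+2 -> i = j.
Proof. by move=> ilt jlt /(congr1 (@nat_of_ord _)); rewrite !val_natr !modn_small. Qed.

Lemma natr_neq0 k : (0 < k < n.+2)%N -> k%:R <> 0 :> 'I_n.+2.
Proof. by case/andP=> k0 kn /(@natr_inj k 0 kn isT) k_0; rewrite k_0 in k0. Qed.

Lemma natr_order : n.+2%:R = 0 :> 'I_n.+2.
Proof. by apply: ord_inj; rewrite val_natr modnn. Qed.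

Lemma fdistE x y : fdist x y = y - x :> nat.
Proof. by rewrite /fdist /= modnDmr addnBA // ltnW. Qed.

Lemma fdist_lt x y : (fdist x y < n.+2)%N.
Proof. exact: ltn_pmod. Qed.

Lemma fdist_addr x k : fdist x (x + k%:R) = (k %% n.+2)%N.
Proof. by rewrite fdistE addrC addKr; apply: val_natr. Qed.

Lemma addr_fdist x y : x + (fdist x y)%:R = y.
Proof. by rewrite fdistE natr_Zp addrC subrK. Qed.

Lemma fdist_eq0 x y : (fdist x y == 0%N) = (x == y).
Proof.
apply/eqP/eqP=> [d0|<-]; first by rewrite -(addr_fdist x y) d0 addr0.
by rewrite fdistE subrr.
Qed.

Lemma fdist_gt0 x y : (0 < fdist x y)%N = (x != y).
Proof. by rewrite lt0n fdist_eq0. Qed.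

Lemma d1C x y : d1 x y = d1 y x.
Proof. by rewrite /d1 /cdist [minn (fdist _ _) _]minnC. Qed.

Lemma d1xx x : d1 x x = 0%N.
Proof. by rewrite /d1 /cdist fdistE subrr. Qed.

Lemma d1_eq0 x y : d1 x y = 0%N -> x = y.
Proof.
rewrite /d1 /cdist => d0; apply/eqP.
have [/eqP|/eqP] : fdist x y = 0%N \/ fdist y x = 0%N by lia.
  by rewrite fdist_eq0.
by rewrite fdist_eq0 eq_sym.
Qed.

Lemma d1_eq1 x y : d1 x y = 1%N -> y = x + 1 \/ y = x - 1.
Proof.
rewrite /d1 /cdist => d1xy.
have [d|d] : fdist x y = 1%N \/ fdist y x = 1%N by lia.
  by left; rewrite -(addr_fdist x y) d.
by right; rewrite -(addr_fdist y x) d addrK.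
Qed.

Lemma d1_addr1 x : (2 < n.+2)%N -> d1 x (x + 1) = 1%N.
Proof.
move=> n_gt2; rewrite /d1 /cdist.
have -> : fdist x (x + 1) = 1%N by move: (fdist_addr x 1); rewrite modn_small.
have -> : fdist (x + 1) x = n.+1.
  have xE : x = x + 1 + n.+1%:R by rewrite -addrA -mulrS natr_order addr0.
  by rewrite {2}xE fdist_addr modn_small.
lia.
Qed.

Lemma d1_subr1 x : (2 < n.+2)%N -> d1 x (x - 1) = 1%N.
Proof. by move=> n_gt2; rewrite d1C -{2}(subrK 1 x) d1_addr1. Qed.

Section Gaps.
Variable S : {set 'I_n.+2}.

Definition free_after u k := forall i, (0 < i <= k)%N -> u + i%:R \notin S.

Lemma free_afterS u k : u + 1 \notin S -> free_after (u + 1) k -> free_after u k.+1.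
Proof. by move=> u1 free [|[|i]] // ik; rewrite mulrS addrA; apply: free. Qed.

Lemma free_after_fdist u k v : free_after u k -> v \in S -> u != v ->
  (k < fdist u v)%N.
Proof.
move=> free vS uv; rewrite ltnNge; apply: contraL vS => vk.
by rewrite -(addr_fdist u v) free // fdist_gt0 uv.
Qed.

Lemma mem_gap u k i : (k < n.+2)%N -> free_after u k -> (0 < i <= k)%N ->
  u + i%:R \in gap S u.
Proof.
move=> kn free /andP[i0 ik]; rewrite inE fdist_addr modn_small ?i0 /=; last lia.
apply/forall_inP=> v vS; have [<-|uv] := eqVneq u v; first by rewrite fdist_gt0 eqxx.
by rewrite fdist_gt0 uv -ltnNge (leq_ltn_trans ik) // free_after_fdist.
Qed.

Lemma free_after_gap u k : (k < n.+2)%N -> free_after u k -> (k <= #|gap S u|)%N.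
Proof.
move=> kn free.
have sub : [set u + i.+1%:R | i : 'I_k] \subset gap S u.
  by apply/subsetP=> _ /imsetP[i _ ->]; apply: (mem_gap kn free); rewrite ltn_ord.
rewrite -[k in (k <= _)%N]card_ord; apply: leq_trans (subset_leq_card sub).
rewrite card_imset // => i j /addrI /natr_inj eq_ij.
by apply/ord_inj/succn_inj/eq_ij; apply: leq_ltn_trans kn.
Qed.

Lemma next_in_free_after u k : (0 < k < n.+2)%N -> u + k%:R \in S ->
  free_after u k.-1 -> next_in S u (u + k%:R).
Proof.
move=> /andP[k0 kn] ukS free; split=> //.
  by rewrite -subr_eq0 addrC addKr; apply/eqP/natr_neq0; rewrite k0.
move=> w wS; rewrite fdist_addr modn_small // fdist_gt0 => uw.
by rewrite -(prednK k0) free_after_fdist.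
Qed.

Lemma free_after_subset u : free_after u n.+1 -> S \subset [set u].
Proof.
move=> free; apply/subsetP=> s sS; rewrite inE eq_sym.
by apply: contraTT (fdist_lt u s) => us; rewrite -leqNgt free_after_fdist.
Qed.

Lemma exists_prev_in u0 w : u0 \in S -> w \notin S ->
  exists u k, [/\ u \in S, (0 < k < n.+2)%N, w = u + k%:R & free_after u k].
Proof.
move=> u0S wS; have [u uS umin] := arg_minnP (fun u => fdist u w) u0S.
exists u, (fdist u w); split; rewrite ?addr_fdist //.
  by rewrite fdist_lt andbT fdist_gt0; apply: contraNneq wS => <-.
move=> i /andP[i0 iw]; apply/negP=> uiS.
have dist_ui : fdist (u + i%:R) w = (fdist u w - i)%N.
  rewrite -{1}(addr_fdist u w) -{1}(subnKC iw) natrD addrA fdist_addr.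
  by rewrite modn_small //; have := fdist_lt u w; lia.
by have := umin _ uiS; rewrite dist_ui; lia.
Qed.

Lemma free_after_long_gap u0 w k : u0 \in S -> (0 < k < n.+2)%N ->
  free_after w k -> exists2 u, u \in S & (k <= #|gap S u|)%N.
Proof.
move=> u0S /andP[k0 kn] free.
have [u [d [uS /andP[d0 _] wE freeu]]] := exists_prev_in u0S (free 1%N k0).
exists u => //; apply: (free_after_gap kn) => i /andP[i0 ik].
have [id|di] := leqP i d; first by apply: freeu; rewrite i0.
rewrite -(subnKC (ltnW di)) natrD addrA -wE -addrA -mulrS.
by apply: free; lia.
Qed.

Lemma gap_inj a b : a \in S -> b \in S -> a + 1 \notin S -> gap S a = gap S b -> a = b.
Proof.
move=> aS bS a1S gab; apply/eqP/negPn/negP=> ab.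
have : a + 1 \in gap S b.
  rewrite -gab; apply: (@mem_gap a 1 1) => // i /andP[i0 i1].
  by have -> : i = 1%N by lia.
rewrite inE => /andP[_ /forall_inP/(_ a aS)]; apply/negP/negPn.
have a0 : (0 < fdist b a)%N by rewrite fdist_gt0 eq_sym.
have [lt|ge] := ltnP (fdist b a).+1 n.+2.
  by rewrite -{3}(addr_fdist b a) -addrA natr1 fdist_addr a0 modn_small //= leqnSn.
have wrap : (fdist b a).+1 = n.+2 by have := fdist_lt b a; lia.
by move: a1S; rewrite -(addr_fdist b a) -addrA natr1 wrap natr_order addr0 bS.
Qed.

Definition d1_twins x y := x != y /\ {in S, forall z, d1 x z = d1 y z}.

Lemma d1_twinsC x y : d1_twins x y -> d1_twins y x.
Proof. by case=> xy d1xy; split=> [|z /d1xy //]; rewrite eq_sym. Qed.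

Lemma d1_twin_notin x y : d1_twins x y -> x \notin S.
Proof.
case=> xy d1xy; apply: contraNN xy => /d1xy.
by rewrite d1xx => /esym/d1_eq0 ->.
Qed.

Section GapConditions.
Hypothesis n_ge5 : (5 <= n.+2)%N.
Hypothesis S_ge2 : (2 <= #|S|)%N.
Hypothesis gap_le3 : forall G, G \in gaps S -> (#|G| <= 3)%N.
Hypothesis neighbor_gaps_small : forall G H, neighboring_gaps S G H ->
  (2 <= #|G| -> #|H| <= 1)%N /\ (2 <= #|H| -> #|G| <= 1)%N.

Lemma not_free_after4 w : ~ free_after w 4.
Proof.
move=> free; have /card_gt0P[u0 u0S] : (0 < #|S|)%N by apply: leq_trans S_ge2.
have [|u uS] := free_after_long_gap u0S _ free; first lia.
by have := gap_le3 (imset_f _ uS); lia.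
Qed.

Lemma free_after3_uniq a b : (#|[set G in gaps S | #|G| == 3%N]| <= 1)%N ->
  a \in S -> b \in S -> free_after a 3 -> free_after b 3 -> a = b.
Proof.
move=> gap3_le1 aS bS fa fb; apply: gap_inj (fa 1%N isT) _ => //.
have gap3 u : u \in S -> free_after u 3 -> #|gap S u| = 3%N.
  move=> uS fu; apply/eqP; rewrite eqn_leq gap_le3 ?imset_f //.
  by apply: free_after_gap => //; apply: ltnW.
apply/eqP; apply: contraTT gap3_le1 => neq; rewrite -ltnNge.
have sub : [set gap S a; gap S b] \subset [set G in gaps S | #|G| == 3%N].
  by apply/subsetP=> G; rewrite !inE => /orP[]/eqP->; rewrite imset_f //= ?gap3.
by apply: leq_trans (subset_leq_card sub); rewrite cards2 neq.
Qed.

Lemma no_isolated_vertex v : v \in S -> v - 1 \notin S -> v - 2 \notin S ->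
  free_after v 2 -> False.
Proof.
move=> vS v1S v2S fv.
have /card_gt0P[u0 u0S] : (0 < #|S|)%N by apply: leq_trans S_ge2.
have [u [k [uS /andP[k0 kn] v1E fu]]] := exists_prev_in u0S v1S.
have vE : v = u + k.+1%:R by rewrite -natr1 addrA -v1E subrK.
have k2 : (2 <= k)%N.
  case: k k0 {kn} v1E {vE fu} => [|[|k]] // _ v1E.
  by move: v2S; rewrite (_ : v - 2 = u) ?uS // -(subrK 1 v) v1E; ring.
have k1n : (k.+1 < n.+2)%N.
  rewrite ltn_neqAle kn andbT; apply: contraTneq S_ge2 => kE.
  case: kE fu => -> /free_after_subset/subset_leq_card.
  by rewrite cards1 -ltnNge ltnS.
have next_uv : next_in S u v.
  by rewrite vE; apply: next_in_free_after; rewrite -?vE //; lia.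
have [|small _] := @neighbor_gaps_small (gap S u) (gap S v); first by exists u, v.
have gap_u : (2 <= #|gap S u|)%N.
  by apply: free_after_gap => [|i /andP[i0 i2]]; [lia | apply: fu; lia].
have gap_v : (2 <= #|gap S v|)%N by apply: free_after_gap => //; lia.
by have := small gap_u; lia.
Qed.

Lemma d1_twin_succ_notin x y : d1_twins x y -> x + 1 \notin S.
Proof.
move=> twins; have [xy d1xy] := twins; apply/negP=> x1S.
have yE : y = x + 2.
  move: (d1xy _ x1S); rewrite d1_addr1; last lia.
  move=> /esym/d1_eq1[/addIr exy|e]; first by rewrite exy eqxx in xy.
  by rewrite -(subrK 1 y) -e; ring.
apply: (@no_isolated_vertex (x + 1)) => //.
- by rewrite addrK (d1_twin_notin twins).
- rewrite (_ : x + 1 - 2 = x - 1); last by ring.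
  apply/negP=> xm; move: (d1xy _ xm); rewrite d1_subr1; last lia.
  move=> /esym/d1_eq1[e|/addIr exy]; last by rewrite exy eqxx in xy.
  apply: (@natr_neq0 4); first lia.
  by rewrite -(subrr (x - 1)) {1}e yE; ring.
- move=> [|[|[|i]]] // _.
    by rewrite (_ : x + 1 + 1%:R = y) ?(d1_twin_notin (d1_twinsC twins)) // yE; ring.
  apply/negP=> x3S; move: (d1xy _ x3S).
  rewrite (_ : x + 1 + 2%:R = y + 1); last by rewrite yE; ring.
  rewrite d1_addr1; last lia.
  move=> /d1_eq1[e|e].
    apply: (@natr_neq0 2); first lia.
    by rewrite -(subrr (x + 1)) -{1}e yE; ring.
  apply: (@natr_neq0 4); first lia.
  by rewrite -(subrr (x - 1)) -{1}e yE; ring.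
Qed.

Lemma d1_twin_pred_notin x y : d1_twins x y -> x - 1 \notin S.
Proof.
move=> twins; have [xy d1xy] := twins; apply/negP=> xm.
move: (d1xy _ xm); rewrite d1_subr1; last lia.
move=> /esym/d1_eq1[e|/addIr exy]; last by rewrite exy eqxx in xy.
by move: (d1_twin_succ_notin (d1_twinsC twins)); rewrite -e xm.
Qed.

Lemma d1_twin_gap3 x y : d1_twins x y -> x - 2 \in S /\ free_after (x - 2) 3.
Proof.
move=> twins.
have free3 : free_after (x - 2) 3.
  move=> [|[|[|[|i]]]] // _.
  - by rewrite (_ : x - 2 + 1%:R = x - 1) ?(d1_twin_pred_notin twins) //; ring.
  - by rewrite (_ : x - 2 + 2%:R = x) ?(d1_twin_notin twins) //; ring.
  - by rewrite (_ : x - 2 + 3%:R = x + 1) ?(d1_twin_succ_notin twins) //; ring.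
split=> //; apply/negPn/negP=> x2.
rewrite (_ : x - 2 = x - 3 + 1) in x2 free3; last by ring.
exact: not_free_after4 (free_afterS x2 free3).
Qed.

End GapConditions.
End Gaps.
End Cycle.

Theorem lemma3p3 (n : nat) (S : {set 'I_n}) :
  5 <= n ->
  2 <= #|S| ->
  (forall G, G \in gaps S -> #|G| <= 3) ->
  #|[set G in gaps S | #|G| == 3]| <= 1 ->
  (forall G H, neighboring_gaps S G H ->
     (2 <= #|G| -> #|H| <= 1) /\ (2 <= #|H| -> #|G| <= 1)) ->
  dist1_resolving S.
Proof.
case: n S => [|[|n]] // S n_ge5 S_ge2 gap_le3 gap3_le1 neighbor x y xy.
apply/exists_inP; apply: contraT => /exists_inPn d1xy.
have twins : d1_twins S x y by split=> // z /d1xy/negPn/eqP.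
have [xS fx] := d1_twin_gap3 n_ge5 S_ge2 gap_le3 neighbor twins.
have [yS fy] := d1_twin_gap3 n_ge5 S_ge2 gap_le3 neighbor (d1_twinsC twins).
move: xy; rewrite -(subrK 2%R x) -(subrK 2%R y).
by rewrite (free_after3_uniq n_ge5 gap_le3 gap3_le1 xS yS fx fy) eqxx.
Qed.
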